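(* Fix $\tau$ with $0<\tau\le\frac1{8d^2}$ and a slack vector $\nu$ with $\|\nu\|_\infty\le\frac1{4d}$. (1) If $\Gamma\in\mathbb L_2^\nu$, then there exists $\Gamma'\in\mathbb L_2$ such that $\Gamma'_i(x_i)\ge\tau$ for all $i\in\mathcal V$, $x_i\in\chi$, $\Gamma'_{ij}(x_i,x_j)\ge\tau$ for all $ij\in\mathcal E$, $x_i,x_j\in\chi$, and $\|\Gamma-\Gamma'\|_1\le2\|\nu\|_1+2(|\mathcal E|+n)d^2\tau$. (2) If $\Gamma\in\mathbb L_2$, then there exists $\Gamma'\in\mathbb L_2^\nu$ such that $\Gamma'_i(x_i)\ge\tau$ for all $i,x_i$, $\Gamma'_{ij}(x_i,x_j)\ge\tau$ for all $ij,x_i,x_j$, and $\|\Gamma-\Gamma'\|_1\le6d\deg(G)\|\nu\|_1+8(|\mathcal E|+n)d^2\tau$.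
   Context: Let $G=(\mathcal V,\mathcal E)$ be a graph with $\mathcal V=\{1,\dots,n\}$, edges ordered pairs $ij$, maximum degree $\deg(G)$, and $\chi=\{0,\dots,d-1\}$; $\Sigma_d$ is the probability simplex in $\mathbb R^d$ and $\mathbb 1$ the all-ones vector. A marginal vector $\Gamma$ consists of $\Gamma_i\in\mathbb R^d$ ($i\in\mathcal V$) and $\Gamma_{ij}\in\mathbb R^{d\times d}$ ($ij\in\mathcal E$); $\|\cdot\|_1$ is the sum of absolute values of all entries and $\|\cdot\|_\infty$ the maximum absolute entry. A slack vector $\nu$ consists of vectors $\nu_{ij},\nu_{ji}\in\mathbb R^d$ for each $ij\in\mathcal E$ with $\nu_{ij}^\top\mathbb 1=\nu_{ji}^\top\mathbb 1=0$. The slack polytope is $\mathbb L_2^\nu=\{\Gamma\ge0:\Gamma_i\in\Sigma_d\ \forall i;\ \Gamma_{ij}\mathbb 1=\Gamma_i+\nu_{ij},\ \Gamma_{ij}^\top\mathbb 1=\Gamma_j+\nu_{ji},\ \mathbb 1^\top\Gamma_{ij}\mathbb 1=1\ \forall ij\in\mathcal E\}$; $\mathbb L_2=\mathbb L_2^0$. *)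

From HB Require Import structures.
From mathcomp Require Import all_boot all_order all_algebra.
Set Implicit Arguments. Unset Strict Implicit. Unset Printing Implicit Defensive.
Import Order.TTheory GRing.Theory Num.Theory.
Local Open Scope ring_scope.

(* Vertices V = 'I_n, labels chi = 'I_d, edges E : {set 'I_n * 'I_n}
   (ordered pairs ij). *)

Definition simple_edges (n : nat) (E : {set 'I_n * 'I_n}) : Prop :=
  forall e, e \in E -> e.1 != e.2 /\ (e.2, e.1) \notin E.

Definition max_deg (n : nat) (E : {set 'I_n * 'I_n}) : nat :=
  \max_(i < n) #|[set e in E | (e.1 == i) || (e.2 == i)]|.

(* A marginal vector: Gamma_i in R^d (node) and Gamma_ij in R^{d x d} (edge);
   edge components are only relevant for ij in E. *)
Record marg (R : Type) (n d : nat) := Marg {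
  node : 'I_n -> 'I_d -> R ;
  edge : 'I_n -> 'I_n -> 'I_d -> 'I_d -> R }.

(* A slack vector nu: for ij in E, the vectors nu i j (= nu_ij) and
   nu j i (= nu_ji) in R^d, each summing to zero. *)
Definition slack (R : numDomainType) (n d : nat) := 'I_n -> 'I_n -> 'I_d -> R.

Definition is_slack (R : numDomainType) (n d : nat) (E : {set 'I_n * 'I_n})
  (nu : slack R n d) : Prop :=
  forall e, e \in E ->
    \sum_(x < d) nu e.1 e.2 x = 0 /\ \sum_(x < d) nu e.2 e.1 x = 0.

Definition slack_norm1 (R : numDomainType) (n d : nat) (E : {set 'I_n * 'I_n})
  (nu : slack R n d) : R :=
  \sum_(e in E) \sum_(x < d) (`|nu e.1 e.2 x| + `|nu e.2 e.1 x|).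

Definition slack_norminf (R : realDomainType) (n d : nat) (E : {set 'I_n * 'I_n})
  (nu : slack R n d) : R :=
  \big[Num.max/0]_(e in E) \big[Num.max/0]_(x < d)
     Num.max `|nu e.1 e.2 x| `|nu e.2 e.1 x|.

Definition marg_dist1 (R : numDomainType) (n d : nat) (E : {set 'I_n * 'I_n})
  (G G' : marg R n d) : R :=
  \sum_(i < n) \sum_(x < d) `|node G i x - node G' i x|
  + \sum_(e in E) \sum_(x < d) \sum_(y < d)
        `|edge G e.1 e.2 x y - edge G' e.1 e.2 x y|.

Definition in_L2nu (R : numDomainType) (n d : nat) (E : {set 'I_n * 'I_n})
  (nu : slack R n d) (G : marg R n d) : Prop :=
  (forall i x, 0 <= node G i x) /\
  (forall i, \sum_(x < d) node G i x = 1) /\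
  (forall e, e \in E ->
     (forall x y, 0 <= edge G e.1 e.2 x y) /\
     (forall x, \sum_(y < d) edge G e.1 e.2 x y = node G e.1 x + nu e.1 e.2 x) /\
     (forall y, \sum_(x < d) edge G e.1 e.2 x y = node G e.2 y + nu e.2 e.1 y) /\
     \sum_(x < d) \sum_(y < d) edge G e.1 e.2 x y = 1).

Definition zero_slack (R : numDomainType) (n d : nat) : slack R n d :=
  fun _ _ _ => 0.

Definition in_L2 (R : numDomainType) (n d : nat) (E : {set 'I_n * 'I_n})
  (G : marg R n d) : Prop := in_L2nu E (@zero_slack R n d) G.

Definition lower_bounded (R : numDomainType) (n d : nat) (E : {set 'I_n * 'I_n})
  (tau : R) (G : marg R n d) : Prop :=
  (forall i x, tau <= node G i x) /\
  (forall e, e \in E -> forall x y, tau <= edge G e.1 e.2 x y).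

(* On an edge ij the matrix Gamma_ij has marginals Gamma_i + nu_ij and
   Gamma_j + nu_ji.  Removing from every entry the larger of the surplus shares of its
   row and its column leaves rows and columns short by nonnegative deficits p, q of the
   same total T <= |nu_ij|_1 + |nu_ji|_1, and adding the rank-one matrix p q^T / T
   restores the marginals Gamma_i, Gamma_j at l1-cost 2T.  Mixing the resulting point of
   L_2 with the uniform marginals, with weight d^2 tau, lifts every entry above tau and
   costs at most d^2 tau times the l1-diameter 2(|E| + n) of L_2.

   Node i is mixed with the uniform distribution with weight
   alpha_i = 2 d m_i + 4 d^2 tau, where m_i is the largest slack entry at i.  On an edge,
   Gamma_ij is shrunk by the factor 1 - beta, beta = max(alpha_i, alpha_j), and the
   missing row and column masses p, q (each of total beta) are supplied by p q^T / beta.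
   The uniform part alpha_i / d of p dominates the slack, so p >= alpha_i / (2d) and
   q >= alpha_j / (2d), whence every entry is at least min(alpha_i, alpha_j) / (4 d^2),
   which is >= tau.  The cost is 2 alpha_i per node and 2 beta per edge; 2 m_i is at most
   the l1 norm of a slack vector at i, and each m_i is charged by at most deg(G) edges. *)

From HB Require Import structures.
From mathcomp Require Import all_boot all_order all_algebra.
From mathcomp Require Import ring lra.
Set Implicit Arguments. Unset Strict Implicit. Unset Printing Implicit Defensive.
Import Order.TTheory GRing.Theory Num.Theory.
Local Open Scope ring_scope.

Lemma max0_le_norm (R : realDomainType) (x : R) : Num.max x 0 <= `|x|.
Proof. by rewrite ge_max ler_norm normr_ge0. Qed.

Lemma mul_div_max (R : realFieldType) (x y : R) :
  0 < x -> 0 < y -> x * y / Num.max x y = Num.min x y.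
Proof.
move=> x_gt0 y_gt0; case: leP => [xy|yx]; first by rewrite mulfK ?gt_eqF.
by rewrite [x * y]mulrC mulfK ?gt_eqF.
Qed.

Lemma norm_sub_mix (R : numDomainType) (g f h eps : R) :
  0 <= eps -> `|g - ((1 - eps) * f + eps * h)| <= `|g - f| + eps * `|f - h|.
Proof.
move=> eps_ge0; rewrite -[eps in X in _ <= _ + X](ger0_norm eps_ge0) -normrM.
have -> : g - ((1 - eps) * f + eps * h) = (g - f) + eps * (f - h) by ring.
exact: ler_normD.
Qed.

Lemma sum_norm_sub_le (R : numDomainType) (I : finType) (f g : I -> R) :
  (forall z, 0 <= f z) -> (forall z, 0 <= g z) ->
  \sum_z `|f z - g z| <= \sum_z f z + \sum_z g z.
Proof.
move=> f_ge0 g_ge0; rewrite -big_split; apply: ler_sum => z _.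
by rewrite -[f z in X in _ <= X]ger0_norm // -[g z in X in _ <= X]ger0_norm // ler_normB.
Qed.

Lemma bigmax_le_sum (R : realDomainType) (I : finType) (P : pred I) (F : I -> R) :
  (forall i, P i -> 0 <= F i) -> \big[Num.max/0]_(i | P i) F i <= \sum_(i | P i) F i.
Proof.
move=> F_ge0; apply: bigmax_le => [|j Pj]; first exact: sumr_ge0.
by rewrite (bigD1 j) //= lerDl sumr_ge0 // => i /andP[Pi _]; apply: F_ge0.
Qed.

Lemma supnorm_zero_sum (R : realFieldType) (I : finType) (v : I -> R) :
  \sum_z v z = 0 -> 2 * \big[Num.max/0]_z `|v z| <= \sum_z `|v z|.
Proof.
move=> sum_v; rewrite mulrC -ler_pdivlMr ?ltr0Sn //.
apply: bigmax_le => [|z _]; first by rewrite divr_ge0 ?sumr_ge0.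
rewrite ler_pdivlMr ?ltr0Sn // (bigD1 z) //=.
have -> : v z = - \sum_(x | x != z) v x.
  by move: sum_v; rewrite (bigD1 z) //= => /eqP; rewrite addr_eq0 => /eqP.
by rewrite normrN mulrDr mulr1 lerD2l ler_norm_sum.
Qed.

Lemma sum_unif (R : numFieldType) (d : nat) : (0 < d)%N -> \sum_(x < d) d%:R^-1 = 1 :> R.
Proof.
by move=> d_gt0; rewrite sumr_const card_ord -[_ *+ d]mulr_natl mulfV // pnatr_eq0 -lt0n.
Qed.

Section RankOneFill.

Variables (R : realFieldType) (I J : finType).
Variables (M : I -> J -> R) (p : I -> R) (q : J -> R).
Hypotheses (p_ge0 : forall x, 0 <= p x) (q_ge0 : forall y, 0 <= q y).
Hypothesis sum_qp : \sum_y q y = \sum_x p x.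

(* If \sum_z p z = 0 the correction is 0 (as x / 0 = 0), and so is p: no
   nondegeneracy assumption is needed below. *)
Definition rank_one_fill x y := M x y + p x * q y / \sum_z p z.

Lemma sum_fill_row x : \sum_y p x * q y / \sum_z p z = p x.
Proof.
rewrite -mulr_suml -mulr_sumr sum_qp.
have [S0|S_neq0] := eqVneq (\sum_z p z) 0; last by rewrite mulfK.
by rewrite S0 mulr0 mul0r (psumr_eq0P (fun z _ => p_ge0 z) S0).
Qed.

Lemma sum_fill_col y : \sum_x p x * q y / \sum_z p z = q y.
Proof.
rewrite -mulr_suml -mulr_suml [_ * q y]mulrC.
have [S0|S_neq0] := eqVneq (\sum_z p z) 0; last by rewrite mulfK.
by rewrite S0 invr0 !mulr0 (psumr_eq0P (P := predT) (fun z _ => q_ge0 z)) ?mul0r // sum_qp.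
Qed.

Lemma fill_ge0 x y : 0 <= p x * q y / \sum_z p z.
Proof. by rewrite divr_ge0 ?mulr_ge0 ?sumr_ge0. Qed.

Lemma rank_one_fill_ge0 x y : 0 <= M x y -> 0 <= rank_one_fill x y.
Proof. by move=> M_ge0; rewrite addr_ge0 ?fill_ge0. Qed.

Lemma sum_rank_one_fill_row x :
  \sum_y rank_one_fill x y = \sum_y M x y + p x.
Proof. by rewrite big_split /= sum_fill_row. Qed.

Lemma sum_rank_one_fill_col y :
  \sum_x rank_one_fill x y = \sum_x M x y + q y.
Proof. by rewrite big_split /= sum_fill_col. Qed.

Lemma dist_rank_one_fill (A : I -> J -> R) :
  \sum_x \sum_y `|A x y - rank_one_fill x y|
    <= \sum_x \sum_y `|A x y - M x y| + \sum_x p x.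
Proof.
rewrite -(eq_bigr _ (fun x _ => sum_fill_row x)) -big_split /=.
apply: ler_sum => x _; rewrite -big_split /=; apply: ler_sum => y _.
rewrite /rank_one_fill opprD addrA.
by rewrite -[X in _ <= _ + X](ger0_norm (fill_ge0 x y)) ler_normB.
Qed.

End RankOneFill.

Definition surplus_share (R : realFieldType) (T : Type) (u v : T -> R) (x : T) : R :=
  Num.max (v x) 0 / (u x + v x).

Lemma surplus_shareP (R : realFieldType) (T : Type) (u v : T -> R) x :
  0 <= u x -> 0 <= u x + v x ->
  [/\ 0 <= surplus_share u v x, surplus_share u v x <= 1
    & surplus_share u v x * (u x + v x) = Num.max (v x) 0].
Proof.
move=> u_ge0 uv_ge0; rewrite /surplus_share.
have pos_le : Num.max (v x) 0 <= u x + v x by rewrite ge_max uv_ge0 andbT; lra.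
have [uv0|uv_neq0] := eqVneq (u x + v x) 0.
  have -> : Num.max (v x) 0 = 0.
    by apply/eqP; rewrite eq_le -[X in _ <= X]uv0 pos_le le_max lexx orbT.
  by rewrite uv0 mul0r mulr0 lexx ler01.
rewrite divfK // divr_ge0 ?le_max ?lexx ?orbT //.
by rewrite ler_pdivrMr ?mul1r // lt_def uv_neq0.
Qed.

Section MarginalCorrection.

Variables (R : realFieldType) (I J : finType).
Variables (A : I -> J -> R) (r a : I -> R) (c b : J -> R).
Hypotheses (A_ge0 : forall x y, 0 <= A x y).
Hypotheses (r_ge0 : forall x, 0 <= r x) (c_ge0 : forall y, 0 <= c y).
Hypothesis row_sum : forall x, \sum_y A x y = r x + a x.
Hypothesis col_sum : forall y, \sum_x A x y = c y + b y.
Hypotheses (sum_a : \sum_x a x = 0) (sum_b : \sum_y b y = 0).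

Let s := surplus_share r a.
Let t := surplus_share c b.

Let shareP_row x : [/\ 0 <= s x, s x <= 1 & s x * (r x + a x) = Num.max (a x) 0].
Proof. by apply: surplus_shareP; rewrite // -row_sum sumr_ge0. Qed.

Let shareP_col y : [/\ 0 <= t y, t y <= 1 & t y * (c y + b y) = Num.max (b y) 0].
Proof. by apply: surplus_shareP; rewrite // -col_sum sumr_ge0. Qed.

Let removed x y := A x y * Num.max (s x) (t y).

Let p x := \sum_y removed x y - a x.
Let q y := \sum_x removed x y - b y.

Let removed_ge0 x y : 0 <= removed x y.
Proof. by have [s_ge0 _ _] := shareP_row x; rewrite mulr_ge0 // le_max s_ge0. Qed.

Let removed_le x y : removed x y <= A x y.
Proof.
have [_ s_le1 _] := shareP_row x; have [_ t_le1 _] := shareP_col y.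
by rewrite ler_piMr // ge_max s_le1.
Qed.

Let removed_le_split x y : removed x y <= A x y * s x + A x y * t y.
Proof.
have [s_ge0 _ _] := shareP_row x; have [t_ge0 _ _] := shareP_col y.
by rewrite -mulrDr ler_wpM2l // ge_max lerDl lerDr s_ge0 t_ge0.
Qed.

Let row_deficit_ge0 x : 0 <= p x.
Proof.
have [_ _ sE] := shareP_row x.
have a_le : a x <= Num.max (a x) 0 by rewrite le_max lexx.
rewrite subr_ge0 (le_trans a_le) // -sE mulrC -row_sum mulr_suml.
by apply: ler_sum => y _; rewrite ler_wpM2l // le_max lexx.
Qed.

Let col_deficit_ge0 y : 0 <= q y.
Proof.
have [_ _ tE] := shareP_col y.
have b_le : b y <= Num.max (b y) 0 by rewrite le_max lexx.
rewrite subr_ge0 (le_trans b_le) // -tE mulrC -col_sum mulr_suml.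
by apply: ler_sum => x _; rewrite ler_wpM2l // le_max lexx orbT.
Qed.

Let sum_row_deficit : \sum_x p x = \sum_x \sum_y removed x y.
Proof. by rewrite sumrB sum_a subr0. Qed.

Let sum_col_deficit : \sum_y q y = \sum_x \sum_y removed x y.
Proof. by rewrite sumrB sum_b subr0 exchange_big. Qed.

Let sum_removed_le : \sum_x \sum_y removed x y <= \sum_x `|a x| + \sum_y `|b y|.
Proof.
apply: (@le_trans _ _ (\sum_x \sum_y (A x y * s x + A x y * t y))).
  by apply: ler_sum => x _; apply: ler_sum => y _; apply: removed_le_split.
rewrite (eq_bigr _ (fun x _ => big_split _ _ _ _ _)) big_split /= [X in _ + X]exchange_big /=.
apply: lerD; apply: ler_sum => z _; rewrite -mulr_suml.
  by rewrite row_sum mulrC; have [_ _ ->] := shareP_row z; apply: max0_le_norm.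
by rewrite col_sum mulrC; have [_ _ ->] := shareP_col z; apply: max0_le_norm.
Qed.

Definition marginal_correction := rank_one_fill (fun x y => A x y - removed x y) p q.

Lemma marginal_correctionP :
  [/\ forall x y, 0 <= marginal_correction x y,
      forall x, \sum_y marginal_correction x y = r x,
      forall y, \sum_x marginal_correction x y = c y
    & \sum_x \sum_y `|A x y - marginal_correction x y|
        <= 2 * (\sum_x `|a x| + \sum_y `|b y|)].
Proof.
have sum_qp : \sum_y q y = \sum_x p x by rewrite sum_row_deficit sum_col_deficit.
split.
- move=> x y; apply: (rank_one_fill_ge0 row_deficit_ge0 col_deficit_ge0).
  by rewrite subr_ge0 removed_le.
- move=> x; rewrite (sum_rank_one_fill_row _ row_deficit_ge0 sum_qp) sumrB row_sum.
  by rewrite /p; ring.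
- move=> y; rewrite (sum_rank_one_fill_col _ col_deficit_ge0 sum_qp) sumrB col_sum.
  by rewrite /q; ring.
apply: le_trans (dist_rank_one_fill _ row_deficit_ge0 col_deficit_ge0 sum_qp A) _.
rewrite sum_row_deficit.
under eq_bigr do under eq_bigr do rewrite subKr ger0_norm ?removed_ge0 //.
by have := sum_removed_le; lra.
Qed.

End MarginalCorrection.

Definition mix_unif (R : numFieldType) (d : nat) (eps : R) (g : 'I_d -> R) (x : 'I_d) : R :=
  (1 - eps) * g x + eps / d%:R.

Section MixUniform.

Variables (R : realFieldType) (d : nat) (eps : R) (g : 'I_d -> R).
Hypotheses (d_gt0 : (0 < d)%N) (g_ge0 : forall x, 0 <= g x) (sum_g : \sum_x g x = 1).

Lemma sum_mix_unif : \sum_x mix_unif eps g x = 1.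
Proof. by rewrite big_split /= -!mulr_sumr sum_g sum_unif //; ring. Qed.

Lemma dist_mix_unif : 0 <= eps -> \sum_x `|g x - mix_unif eps g x| <= 2 * eps.
Proof.
move=> eps_ge0.
apply: le_trans (_ : \sum_x eps * `|g x - d%:R^-1| <= _).
  apply: ler_sum => x _; have := norm_sub_mix (g x) (g x) d%:R^-1 eps_ge0.
  by rewrite subrr normr0 add0r.
have unif_ge0 (x : 'I_d) : 0 <= d%:R^-1 :> R by rewrite invr_ge0 ler0n.
rewrite -mulr_sumr mulrC ler_wpM2r // (le_trans (sum_norm_sub_le g_ge0 unif_ge0)) //.
by rewrite sum_g sum_unif //.
Qed.

End MixUniform.

Section SlackFill.

Variables (R : realFieldType) (d : nat) (A : 'I_d -> 'I_d -> R).
Variables (g1 g2 v1 v2 : 'I_d -> R) (a1 a2 : R).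
Hypotheses (d_gt0 : (0 < d)%N) (A_ge0 : forall x y, 0 <= A x y).
Hypotheses (row_sum : forall x, \sum_y A x y = g1 x) (col_sum : forall y, \sum_x A x y = g2 y).
Hypotheses (sum_g1 : \sum_x g1 x = 1) (sum_g2 : \sum_y g2 y = 1).
Hypotheses (sum_v1 : \sum_x v1 x = 0) (sum_v2 : \sum_y v2 y = 0).
Hypotheses (v1_le : forall x, `|v1 x| <= a1 / (2 * d%:R)).
Hypotheses (v2_le : forall y, `|v2 y| <= a2 / (2 * d%:R)).
Hypotheses (a1_gt0 : 0 < a1) (a1_le1 : a1 <= 1) (a2_gt0 : 0 < a2) (a2_le1 : a2 <= 1).

Let beta := Num.max a1 a2.
(* the row and column masses missing from (1 - beta) A *)
Let p x := mix_unif a1 g1 x + v1 x - (1 - beta) * g1 x.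
Let q y := mix_unif a2 g2 y + v2 y - (1 - beta) * g2 y.

Definition slack_fill := rank_one_fill (fun x y => (1 - beta) * A x y) p q.

Let d_pos : 0 < d%:R :> R. Proof. by rewrite ltr0n. Qed.
Let beta_gt0 : 0 < beta. Proof. by rewrite lt_max a1_gt0. Qed.
Let beta_le1 : beta <= 1. Proof. by rewrite ge_max a1_le1. Qed.
Let g1_ge0 x : 0 <= g1 x. Proof. by rewrite -row_sum sumr_ge0. Qed.
Let g2_ge0 y : 0 <= g2 y. Proof. by rewrite -col_sum sumr_ge0. Qed.

Let shifted_ge (g v : 'I_d -> R) (a : R) x :
  a <= beta -> 0 <= g x -> `|v x| <= a / (2 * d%:R) ->
  a / (2 * d%:R) <= mix_unif a g x + v x - (1 - beta) * g x.
Proof.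
move=> a_le g_ge0 v_le; rewrite /mix_unif.
have : 0 <= (beta - a) * g x by rewrite mulr_ge0 ?subr_ge0.
have : - `|v x| <= v x by rewrite lerNnormlW.
have -> : a / d%:R = 2 * (a / (2 * d%:R)) by field; rewrite gt_eqF.
lra.
Qed.

Let p_ge x : a1 / (2 * d%:R) <= p x.
Proof. by apply: shifted_ge; rewrite ?le_max ?lexx. Qed.

Let q_ge y : a2 / (2 * d%:R) <= q y.
Proof. by apply: shifted_ge; rewrite ?le_max ?lexx ?orbT. Qed.

Let p_ge0 x : 0 <= p x.
Proof. by apply: le_trans (p_ge x); rewrite divr_ge0 ?mulr_ge0 ?ltW. Qed.

Let q_ge0 y : 0 <= q y.
Proof. by apply: le_trans (q_ge y); rewrite divr_ge0 ?mulr_ge0 ?ltW. Qed.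

Let sum_shifted (g v : 'I_d -> R) (a : R) :
  \sum_x g x = 1 -> \sum_x v x = 0 ->
  \sum_x (mix_unif a g x + v x - (1 - beta) * g x) = beta.
Proof.
move=> sum_g sum_v; rewrite sumrB big_split /= -mulr_sumr sum_v sum_g.
by rewrite (sum_mix_unif _ d_gt0 sum_g); ring.
Qed.

Let sum_p : \sum_x p x = beta. Proof. exact: sum_shifted. Qed.
Let sum_qp : \sum_y q y = \sum_x p x. Proof. by rewrite sum_p; apply: sum_shifted. Qed.

Lemma slack_fillP :
  [/\ forall x y, Num.min a1 a2 / (4 * d%:R ^+ 2) <= slack_fill x y,
      forall x, \sum_y slack_fill x y = mix_unif a1 g1 x + v1 x,
      forall y, \sum_x slack_fill x y = mix_unif a2 g2 y + v2 y
    & \sum_x \sum_y `|A x y - slack_fill x y| <= 2 * beta].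
Proof.
split.
- move=> x y; rewrite /slack_fill /rank_one_fill sum_p.
  apply: (@le_trans _ _ (p x * q y / beta)); last by rewrite lerDr mulr_ge0 ?subr_ge0.
  rewrite -mul_div_max // -/beta mulrAC ler_wpM2r ?invr_ge0 ?(ltW beta_gt0) //.
  have -> : a1 * a2 / (4 * d%:R ^+ 2) = a1 / (2 * d%:R) * (a2 / (2 * d%:R)).
    by field; rewrite gt_eqF.
  by apply: ler_pM; rewrite ?p_ge ?q_ge // divr_ge0 ?mulr_ge0 ?ltW.
- move=> x; rewrite (sum_rank_one_fill_row _ p_ge0 sum_qp) -mulr_sumr row_sum.
  by rewrite /p; ring.
- move=> y; rewrite (sum_rank_one_fill_col _ q_ge0 sum_qp) -mulr_sumr col_sum.
  by rewrite /q; ring.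
apply: le_trans (dist_rank_one_fill _ p_ge0 q_ge0 sum_qp A) _.
have A_rest x y : `|A x y - (1 - beta) * A x y| = beta * A x y.
  have -> : A x y - (1 - beta) * A x y = beta * A x y by ring.
  by rewrite ger0_norm // mulr_ge0 ?(ltW beta_gt0).
under eq_bigr do under eq_bigr do rewrite A_rest.
under eq_bigr do rewrite -mulr_sumr row_sum.
by rewrite -mulr_sumr sum_g1 sum_p mulr1; lra.
Qed.

End SlackFill.

Definition marg_mix (R : numDomainType) (n d : nat) (eps : R) (F H : marg R n d) :=
  Marg (fun i x => (1 - eps) * node F i x + eps * node H i x)
       (fun i j x y => (1 - eps) * edge F i j x y + eps * edge H i j x y).

Definition unif_marg (R : numFieldType) (n d : nat) : marg R n d :=
  Marg (fun _ _ => d%:R^-1) (fun _ _ _ _ => (d%:R ^+ 2)^-1).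

Section MargGeometry.

Variables (R : realFieldType) (n d : nat) (E : {set 'I_n * 'I_n}).

Lemma in_L2_unif_marg : (0 < d)%N -> in_L2 E (unif_marg R n d).
Proof.
move=> d_gt0; have d_neq0 : d%:R != 0 :> R by rewrite pnatr_eq0 -lt0n.
have row_unif : \sum_(y < d) (d%:R ^+ 2)^-1 = d%:R^-1 :> R.
  by rewrite sumr_const card_ord -[_ *+ d]mulr_natr expr2 invfM -mulrA mulVf ?mulr1.
split; [|split] => /=.
- by move=> i x; rewrite invr_ge0 ler0n.
- by move=> i; apply: sum_unif.
move=> e _; split; [|split; [|split]] => /=.
- by move=> x y; rewrite invr_ge0 exprn_ge0 ?ler0n.
- by move=> x; rewrite row_unif /zero_slack addr0.
- by move=> y; rewrite row_unif /zero_slack addr0.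
by under eq_bigr do rewrite row_unif; apply: sum_unif.
Qed.

Lemma in_L2nu_mix (nu : slack R n d) (eps : R) (F H : marg R n d) :
  0 <= eps <= 1 -> in_L2nu E nu F -> in_L2nu E nu H -> in_L2nu E nu (marg_mix eps F H).
Proof.
move=> /andP[eps_ge0 eps_le1] [F0 [F1 FE]] [H0 [H1 HE]].
have mix_ge0 (u v : R) : 0 <= u -> 0 <= v -> 0 <= (1 - eps) * u + eps * v.
  by move=> u0 v0; rewrite addr_ge0 ?mulr_ge0 ?subr_ge0.
have sum_mix (I : finType) (f g : I -> R) :
  \sum_z ((1 - eps) * f z + eps * g z) = (1 - eps) * \sum_z f z + eps * \sum_z g z.
  by rewrite big_split /= -!mulr_sumr.
split; [|split] => /=.
- by move=> i x; apply: mix_ge0.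
- by move=> i; rewrite sum_mix F1 H1; ring.
move=> e eE; have [Fe0 [Fe1 [Fe2 Fe3]]] := FE e eE; have [He0 [He1 [He2 He3]]] := HE e eE.
split; [|split; [|split]] => /=.
- by move=> x y; apply: mix_ge0.
- by move=> x; rewrite sum_mix Fe1 He1; ring.
- by move=> y; rewrite sum_mix Fe2 He2; ring.
by under eq_bigr do rewrite sum_mix; rewrite sum_mix Fe3 He3; ring.
Qed.

Lemma marg_dist1_mix (eps : R) (G F H : marg R n d) : 0 <= eps ->
  marg_dist1 E G (marg_mix eps F H) <= marg_dist1 E G F + eps * marg_dist1 E F H.
Proof.
move=> eps_ge0; rewrite /marg_dist1 mulrDr addrACA !mulr_sumr -!big_split /=.
apply: lerD; apply: ler_sum => z _; rewrite mulr_sumr -big_split /=; apply: ler_sum => x _.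
  exact: norm_sub_mix.
rewrite mulr_sumr -big_split /=; apply: ler_sum => y _; exact: norm_sub_mix.
Qed.

Lemma marg_dist1_le (nu nu' : slack R n d) (F H : marg R n d) :
  in_L2nu E nu F -> in_L2nu E nu' H -> marg_dist1 E F H <= 2 * (#|E| + n)%:R.
Proof.
move=> [F0 [F1 FE]] [H0 [H1 HE]].
have -> : 2 * (#|E| + n)%:R = \sum_(i < n) 2 + \sum_(e in E) 2 :> R.
  by rewrite !sumr_const card_ord natrD; ring.
apply: lerD; apply: ler_sum.
  move=> i _; apply: le_trans (sum_norm_sub_le (F0 i) (H0 i)) _.
  by rewrite F1 H1; lra.
move=> e eE; have [Fe0 [_ [_ Fe3]]] := FE e eE; have [He0 [_ [_ He3]]] := HE e eE.
apply: le_trans (ler_sum _ (fun x _ => sum_norm_sub_le (Fe0 x) (He0 x))) _.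
by rewrite big_split /= Fe3 He3; lra.
Qed.

Lemma lower_bounded_mix_unif (nu : slack R n d) (eps : R) (F : marg R n d) :
  (0 < d)%N -> 0 <= eps <= 1 -> in_L2nu E nu F ->
  lower_bounded E (eps / d%:R ^+ 2) (marg_mix eps F (unif_marg R n d)).
Proof.
move=> d_gt0 /andP[eps_ge0 eps_le1] [F0 [_ FE]].
have d_ge1 : 1 <= d%:R :> R by rewrite ler1n.
have mix_ge (u c : R) : 0 <= u -> eps * c <= (1 - eps) * u + eps * c.
  by move=> u0; rewrite lerDr mulr_ge0 ?subr_ge0.
split => /= [i x | e eE x y]; last by have [Fe0 _] := FE e eE; apply: mix_ge.
apply: le_trans (mix_ge _ _ (F0 i x)); rewrite ler_wpM2l // lef_pV2 ?posrE ?exprn_gt0 ?ltr0n //.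
by rewrite expr2 ler_peMl // ltW.
Qed.

End MargGeometry.

Lemma L2_near_L2nu (R : realFieldType) (n d : nat) (E : {set 'I_n * 'I_n})
    (nu : slack R n d) (G : marg R n d) :
  is_slack E nu -> in_L2nu E nu G ->
  exists G0 : marg R n d, in_L2 E G0 /\ marg_dist1 E G G0 <= 2 * slack_norm1 E nu.
Proof.
move=> nuP [G0 [G1 GE]].
pose fix_edge i j := marginal_correction (edge G i j) (node G i) (nu i j) (node G j) (nu j i).
have fixP e (eE : e \in E) :=
  let: conj Ge0 (conj Ge1 (conj Ge2 _)) := GE e eE in
  let: conj sum1 sum2 := nuP e eE in
  marginal_correctionP Ge0 (G0 e.1) (G0 e.2) Ge1 Ge2 sum1 sum2.
exists (Marg (node G) fix_edge); split.
  split; [|split] => // e eE; have [B0 B1 B2 _] := fixP e eE.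
  split; [|split; [|split]] => //= [x|y|]; rewrite ?B1 ?B2 /zero_slack ?addr0 //.
  by under eq_bigr do rewrite B1; apply: G1.
rewrite /marg_dist1 /slack_norm1 /= big1 ?add0r => [|i _]; last first.
  by rewrite big1 // => x _; rewrite subrr normr0.
rewrite mulr_sumr; apply: ler_sum => e eE; have [_ _ _ Bdist] := fixP e eE.
by rewrite big_split.
Qed.

Lemma L2_interior_near_L2nu (R : realFieldType) (n d : nat) (E : {set 'I_n * 'I_n})
    (tau : R) (nu : slack R n d) (G : marg R n d) :
  (0 < d)%N -> 0 < tau -> tau <= (8 * d%:R ^+ 2)^-1 ->
  is_slack E nu -> in_L2nu E nu G ->
  exists G' : marg R n d, in_L2 E G' /\ lower_bounded E tau G' /\
    marg_dist1 E G G' <= 2 * slack_norm1 E nu + 2 * (#|E| + n)%:R * d%:R ^+ 2 * tau.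
Proof.
move=> d_gt0 tau_gt0 tau_le nuP GP.
have [G0 [G0P G0dist]] := L2_near_L2nu nuP GP.
have d2_gt0 : 0 < d%:R ^+ 2 :> R by rewrite exprn_gt0 ?ltr0n.
set eps := d%:R ^+ 2 * tau.
have eps01 : 0 <= eps <= 1.
  move: tau_le; rewrite -[X in _ <= X]div1r ler_pdivlMr ?mulr_gt0 ?ltr0n // => tau_le.
  by apply/andP; split; [rewrite mulr_ge0 ?ltW | rewrite /eps; lra].
exists (marg_mix eps G0 (unif_marg R n d)); split; [|split].
- exact: in_L2nu_mix eps01 G0P (in_L2_unif_marg R E d_gt0).
- have := lower_bounded_mix_unif d_gt0 eps01 G0P.
  by rewrite /eps [_ * tau]mulrC mulfK ?gt_eqF.
have [eps_ge0 _] := andP eps01.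
apply: le_trans (marg_dist1_mix _ _ _ _ eps_ge0) _.
have unif_dist := marg_dist1_le G0P (in_L2_unif_marg R E d_gt0).
have := ler_wpM2l eps_ge0 unif_dist; rewrite /eps; lra.
Qed.

Definition incident (n : nat) (E : {set 'I_n * 'I_n}) (i : 'I_n) :=
  [set e in E | (e.1 == i) || (e.2 == i)].

Section Degree.

Variables (n : nat) (E : {set 'I_n * 'I_n}).

Lemma card_incident_le_max_deg i : (#|incident E i| <= max_deg E)%N.
Proof. exact: (@leq_bigmax _ (fun j => #|incident E j|)). Qed.

Lemma max_deg_gt0 e : e \in E -> (0 < max_deg E)%N.
Proof.
move=> eE; apply: leq_trans (card_incident_le_max_deg e.1).
by rewrite card_gt0; apply/set0Pn; exists e; rewrite inE eE eqxx.
Qed.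

Lemma sum_edge_ends_le (R : realDomainType) (f : 'I_n -> R) :
  simple_edges E -> (forall i, 0 <= f i) ->
  \sum_(e in E) (f e.1 + f e.2) <= (max_deg E)%:R * \sum_i f i.
Proof.
move=> simpleE f_ge0.
have ends e : e \in E -> f e.1 + f e.2 = \sum_(i | (e.1 == i) || (e.2 == i)) f i.
  move=> eE; have [e12 _] := simpleE e eE.
  rewrite (bigD1 e.1) ?eqxx //= (bigD1 e.2) ?eqxx ?orbT 1?eq_sym //= big1 ?addr0 //.
  by move=> i /andP[/andP[/orP[]/eqP-> ]]; rewrite eqxx // andbF.
rewrite (eq_bigr _ ends) (exchange_big_dep predT) //= mulr_sumr.
apply: ler_sum => i _; rewrite (eq_bigl (mem (incident E i))) => [|e]; last by rewrite !inE.
by rewrite sumr_const -[f i *+ _]mulr_natl ler_wpM2r // ler_nat card_incident_le_max_deg.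
Qed.

End Degree.

Section NodeSlack.

Variables (R : realFieldType) (n d : nat) (E : {set 'I_n * 'I_n}) (nu : slack R n d).

Definition node_slack (i : 'I_n) : R :=
  Num.max (\big[Num.max/0]_(e in E | e.1 == i) \big[Num.max/0]_(x < d) `|nu e.1 e.2 x|)
          (\big[Num.max/0]_(e in E | e.2 == i) \big[Num.max/0]_(x < d) `|nu e.2 e.1 x|).

Lemma node_slack_ge0 i : 0 <= node_slack i.
Proof. by rewrite le_max bigmax_ge_id. Qed.

Lemma slack_le_node_slack e x : e \in E ->
  `|nu e.1 e.2 x| <= node_slack e.1 /\ `|nu e.2 e.1 x| <= node_slack e.2.
Proof.
move=> eE; split; rewrite le_max; apply/orP; [left|right].
  by apply: bigmax_sup (le_bigmax _ _ x); rewrite eE eqxx.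
by apply: bigmax_sup (le_bigmax _ _ x); rewrite eE eqxx.
Qed.

Lemma node_slack_le_norminf i : node_slack i <= slack_norminf E nu.
Proof.
have norminf_ge0 : 0 <= slack_norminf E nu by apply: bigmax_ge_id.
rewrite ge_max; apply/andP; split; apply: bigmax_le => // e /andP[eE _];
  apply: bigmax_le => // x _; apply: (bigmax_sup e) => //; apply: (bigmax_sup x) => //.
  by rewrite le_max lexx.
by rewrite le_max lexx orbT.
Qed.

Lemma sum_node_slack : is_slack E nu -> 2 * \sum_i node_slack i <= slack_norm1 E nu.
Proof.
move=> nuP.
have bigmax_end_le (o : 'I_n * 'I_n -> 'I_n) (v : 'I_n * 'I_n -> 'I_d -> R) i :
    (forall e, e \in E -> \sum_x v e x = 0) ->
    2 * \big[Num.max/0]_(e in E | o e == i) \big[Num.max/0]_x `|v e x|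
      <= \sum_(e in E | o e == i) \sum_x `|v e x|.
  move=> v0; rewrite mulrC; apply: le_trans (ler_wpM2r _ (bigmax_le_sum _)) _ => //.
    by move=> e _; apply: bigmax_ge_id.
  rewrite mulr_suml; apply: ler_sum => e /andP[eE _].
  by rewrite mulrC supnorm_zero_sum ?v0.
have max_le_add (x y : R) : 0 <= x -> 0 <= y -> Num.max x y <= x + y.
  by move=> x0 y0; rewrite ge_max lerDl lerDr x0 y0.
apply: le_trans (_ : \sum_i (\sum_(e in E | e.1 == i) \sum_x `|nu e.1 e.2 x|
                         + \sum_(e in E | e.2 == i) \sum_x `|nu e.2 e.1 x|) <= _).
  rewrite mulr_sumr; apply: ler_sum => i _.
  apply: le_trans (ler_wpM2l _ (max_le_add _ _ (bigmax_ge_id _ _ _ _)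
                                             (bigmax_ge_id _ _ _ _))) _ => //.
  by rewrite mulrDr lerD // bigmax_end_le // => e eE; have [] := nuP e eE.
rewrite big_split /= -(partition_big fst predT) // -(partition_big snd predT) //.
by rewrite /slack_norm1 -big_split; under [X in _ <= X]eq_bigr do rewrite big_split.
Qed.

End NodeSlack.

Section L2nuInterior.

Variables (R : realFieldType) (n d : nat) (E : {set 'I_n * 'I_n}).
Variables (tau : R) (nu : slack R n d) (G : marg R n d).
Hypotheses (d_gt0 : (0 < d)%N) (simpleE : simple_edges E).
Hypotheses (tau_gt0 : 0 < tau) (tau_le : tau <= (8 * d%:R ^+ 2)^-1).
Hypotheses (nuP : is_slack E nu) (nu_le : slack_norminf E nu <= (4 * d%:R)^-1).
Hypothesis GP : in_L2 E G.

Let d_pos : 0 < d%:R :> R. Proof. by rewrite ltr0n. Qed.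
Let alpha0 := 4 * d%:R ^+ 2 * tau.
Let m := node_slack E nu.
Let alpha i := 2 * d%:R * m i + alpha0.

Let alpha0_gt0 : 0 < alpha0. Proof. by rewrite !mulr_gt0 ?exprn_gt0. Qed.

Let alpha0_le_half : alpha0 <= 1 / 2.
Proof.
move: tau_le; rewrite -[X in _ <= X]div1r ler_pdivlMr ?mulr_gt0 ?exprn_gt0 // /alpha0.
lra.
Qed.

Let m_le_half i : 2 * d%:R * m i <= 1 / 2.
Proof.
have := le_trans (node_slack_le_norminf E nu i) nu_le.
by rewrite -[X in _ <= X]div1r ler_pdivlMr ?mulr_gt0 // /m; lra.
Qed.

Let alpha0_le_alpha i : alpha0 <= alpha i.
Proof. by rewrite /alpha lerDr !mulr_ge0 ?ler0n ?node_slack_ge0. Qed.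

Let alpha_gt0 i : 0 < alpha i. Proof. exact: lt_le_trans (alpha0_le_alpha i). Qed.
Let alpha_le1 i : alpha i <= 1.
Proof. by have := m_le_half i; have := alpha0_le_half; rewrite /alpha; lra. Qed.

Let slack_le_alpha e x : e \in E ->
  `|nu e.1 e.2 x| <= alpha e.1 / (2 * d%:R) /\ `|nu e.2 e.1 x| <= alpha e.2 / (2 * d%:R).
Proof.
move=> eE; have [le1 le2] := slack_le_node_slack nu x eE.
have m_le i : m i <= alpha i / (2 * d%:R).
  rewrite ler_pdivlMr ?mulr_gt0 // /alpha mulrC lerDl; exact: ltW.
by split; [apply: le_trans (m_le e.1) | apply: le_trans (m_le e.2)].
Qed.

Let node' i := mix_unif (alpha i) (node G i).
Let edge' i j :=
  slack_fill (edge G i j) (node G i) (node G j) (nu i j) (nu j i) (alpha i) (alpha j).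

Let edgeP e : e \in E ->
  [/\ forall x y, Num.min (alpha e.1) (alpha e.2) / (4 * d%:R ^+ 2) <= edge' e.1 e.2 x y,
      forall x, \sum_y edge' e.1 e.2 x y = node' e.1 x + nu e.1 e.2 x,
      forall y, \sum_x edge' e.1 e.2 x y = node' e.2 y + nu e.2 e.1 y
    & \sum_x \sum_y `|edge G e.1 e.2 x y - edge' e.1 e.2 x y|
        <= 2 * Num.max (alpha e.1) (alpha e.2)].
Proof.
move=> eE; have [_ [G1 GE]] := GP; have [Ge0 [Ge1 [Ge2 _]]] := GE e eE.
have [sum1 sum2] := nuP eE.
apply: slack_fillP => //.
- by move=> x; rewrite Ge1 /zero_slack addr0.
- by move=> y; rewrite Ge2 /zero_slack addr0.
- by move=> x; have [] := slack_le_alpha x eE.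
- by move=> y; have [] := slack_le_alpha y eE.
Qed.

Let G' := Marg node' edge'.

Let near_in_L2nu : in_L2nu E nu G'.
Proof.
have [G0 [G1 _]] := GP.
split; [|split] => /= [i x|i|e eE].
- have alpha_ge0 := ltW (alpha_gt0 i).
  by rewrite /node' /mix_unif addr_ge0 ?mulr_ge0 ?subr_ge0 ?alpha_le1 ?invr_ge0 ?ler0n.
- exact: sum_mix_unif.
have [lb rows cols _] := edgeP eE; have [sum1 _] := nuP eE.
split; [|split; [|split]] => // [x y|].
  apply: le_trans (lb x y); rewrite divr_ge0 ?mulr_ge0 ?exprn_ge0 ?ltW //.
  by rewrite lt_min !alpha_gt0.
under eq_bigr do rewrite rows.
by rewrite big_split /= sum1 addr0; apply: sum_mix_unif.
Qed.

Let near_lower_bounded : lower_bounded E tau G'.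
Proof.
have [G0 _] := GP; have alpha0_tau : alpha0 / (4 * d%:R ^+ 2) = tau.
  by rewrite /alpha0 mulrC mulKf // mulf_neq0 ?expf_neq0 ?gt_eqF.
split => /= [i x|e eE x y].
  apply: le_trans (_ : alpha i / d%:R <= _); last first.
    by rewrite /node' /mix_unif lerDr mulr_ge0 ?subr_ge0.
  rewrite ler_pdivlMr // (le_trans _ (alpha0_le_alpha i)) // /alpha0.
  have d_ge1 : 1 <= d%:R :> R by rewrite ler1n.
  have dtau_ge0 : 0 <= d%:R * tau by rewrite mulr_ge0 ?ltW.
  by rewrite expr2; nra.
have [lb _ _ _] := edgeP eE; apply: le_trans (lb x y).
by rewrite -alpha0_tau ler_wpM2r ?invr_ge0 ?mulr_ge0 ?exprn_ge0 // le_min !alpha0_le_alpha.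
Qed.

Let norm1_le_max_deg : slack_norm1 E nu <= (max_deg E)%:R * slack_norm1 E nu.
Proof.
have [E0|[e eE]] := set_0Vmem E; first by rewrite /slack_norm1 E0 big_set0 mulr0.
rewrite ler_peMl ?ler1n ?(max_deg_gt0 eE) //.
by apply: sumr_ge0 => e' _; apply: sumr_ge0 => x _; rewrite addr_ge0.
Qed.

Let near_dist : marg_dist1 E G G' <=
  6 * d%:R * (max_deg E)%:R * slack_norm1 E nu + 8 * (#|E| + n)%:R * d%:R ^+ 2 * tau.
Proof.
have [G0 [G1 _]] := GP.
have node_dist i : \sum_x `|node G i x - node' i x| <= 2 * alpha i.
  exact: dist_mix_unif d_gt0 (G0 i) (G1 i) (ltW (alpha_gt0 i)).
have edge_dist e : e \in E -> \sum_x \sum_y `|edge G e.1 e.2 x y - edge' e.1 e.2 x y|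
    <= 2 * (2 * d%:R * (m e.1 + m e.2) + alpha0).
  move=> eE; have [_ _ _ dist] := edgeP eE; apply: le_trans dist _.
  rewrite ler_wpM2l // ge_max /alpha !lerD2r !ler_wpM2l ?mulr_ge0 ?ler0n //;
    [rewrite lerDr | rewrite lerDl]; apply: node_slack_ge0.
apply: le_trans (lerD (ler_sum _ (fun i _ => node_dist i)) (ler_sum _ edge_dist)) _.
have sum_alpha : \sum_i 2 * alpha i = 4 * d%:R * \sum_i m i + 2 * n%:R * alpha0.
  rewrite -mulr_sumr big_split /= -mulr_sumr sumr_const card_ord.
  by rewrite -[alpha0 *+ n]mulr_natr; ring.
have sum_edges : \sum_(e in E) 2 * (2 * d%:R * (m e.1 + m e.2) + alpha0)
    = 4 * d%:R * \sum_(e in E) (m e.1 + m e.2) + 2 * #|E|%:R * alpha0.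
  rewrite -mulr_sumr big_split /= -mulr_sumr sumr_const.
  by rewrite -[alpha0 *+ #|E|]mulr_natr; ring.
rewrite sum_alpha sum_edges.
have ends := sum_edge_ends_le simpleE (node_slack_ge0 E nu).
have nodes := sum_node_slack nuP.
have norm1 := norm1_le_max_deg.
set Sm := \sum_i m i in nodes ends *; set Se := \sum_(e in E) _ in ends *.
set D := (max_deg E)%:R in ends norm1 *; set N := slack_norm1 E nu in nodes norm1 *.
have D_ge0 : 0 <= D by rewrite ler0n.
have Sm_ge0 : 0 <= Sm by rewrite sumr_ge0 // => i _; apply: node_slack_ge0.
have := ler_wpM2l (ltW d_pos) ends; have := ler_wpM2l (ltW d_pos) norm1.
have := ler_wpM2l (mulr_ge0 (ltW d_pos) D_ge0) nodes.
have := ler_wpM2l (ltW d_pos) nodes.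
have N_ge0 : 0 <= N by apply: le_trans nodes; rewrite mulr_ge0.
have := mulr_ge0 (mulr_ge0 (ltW d_pos) D_ge0) N_ge0.
rewrite natrD /alpha0; lra.
Qed.

Lemma L2nu_interior_near_L2 : exists G' : marg R n d,
  in_L2nu E nu G' /\ lower_bounded E tau G' /\
  marg_dist1 E G G' <=
    6 * d%:R * (max_deg E)%:R * slack_norm1 E nu + 8 * (#|E| + n)%:R * d%:R ^+ 2 * tau.
Proof. by exists G'. Qed.

End L2nuInterior.

Theorem lemma8 (R : realFieldType) (n d : nat) (E : {set 'I_n * 'I_n})
  (tau : R) (nu : slack R n d) :
  simple_edges E ->
  0 < tau -> tau <= (8 * d%:R ^+ 2)^-1 ->
  is_slack E nu -> slack_norminf E nu <= (4 * d%:R)^-1 ->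
  (forall G : marg R n d, in_L2nu E nu G ->
     exists G' : marg R n d, in_L2 E G' /\ lower_bounded E tau G' /\
       marg_dist1 E G G' <=
         2 * slack_norm1 E nu + 2 * (#|E| + n)%:R * d%:R ^+ 2 * tau) /\
  (forall G : marg R n d, in_L2 E G ->
     exists G' : marg R n d, in_L2nu E nu G' /\ lower_bounded E tau G' /\
       marg_dist1 E G G' <=
         6 * d%:R * (max_deg E)%:R * slack_norm1 E nu
         + 8 * (#|E| + n)%:R * d%:R ^+ 2 * tau).
Proof.
move=> simpleE tau_gt0 tau_le nuP nu_le.
(* For d = 0 the bound on tau reads tau <= 0^-1 = 0. *)
have d_gt0 : (0 < d)%N.
  by move: tau_le; rewrite lt0n; apply: contraTneq => ->; rewrite expr2 !mulr0 invr0 -ltNge.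
split=> G GP.
  exact: L2_interior_near_L2nu.
exact: L2nu_interior_near_L2.
Qed.
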